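(* Let $m,n \in \mathbb{N}$, $S = (s_1,\dots,s_n)^T \in \mathbb{N}^n$ with $s_k \le 2^m$, fix $c \in \mathbb{N}$ and let $N = n^c$. Define $U = (u_1,\dots,u_n)^T$ by $u_k = \left\lfloor N \cdot \frac{s_k}{\|S\|}\right\rfloor$, let $c_a = \frac{\sum_{k=1}^n u_k s_k}{\|U\|\cdot\|S\|}$ (the cosine of the angle between $U$ and $S$) and $d^{\star} = \frac{\sqrt{n}}{2}\sqrt{1-c_a^2}$. Let $Q \in \{0,1\}^n$ satisfy $$U^T\cdot\left(Q - \left(\frac{1}{2}\cdot 1_{n\times 1} + \frac{U}{\|U\|}\cdot d\right)\right) = 0$$ for some $d$ with $-d^{\star} \le d \le d^{\star}$ (equivalently $U^T Q = \frac{U^T 1_{n\times 1}}{2} + d\,\|U\|$). Then $$\left| \frac{S^T \cdot Q}{\frac{S^T \cdot 1_{n\times 1}}{2}} - 1 \right| \le 2\cdot\frac{n}{N}.$$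
   Context: $1_{n\times 1}$ denotes the all-ones vector in $\mathbb{R}^n$ and $\|\cdot\|$ the Euclidean norm. *)

From mathcomp Require Import all_boot all_order all_algebra.
From mathcomp Require Import reals.
Set Implicit Arguments. Unset Strict Implicit. Unset Printing Implicit Defensive.
Import Order.TTheory GRing.Theory Num.Theory.
Local Open Scope ring_scope.

Definition enorm (R : rcfType) (n : nat) (v : 'I_n -> R) : R :=
  Num.sqrt (\sum_(k < n) v k ^+ 2).

Definition dotp (R : pzRingType) (n : nat) (v w : 'I_n -> R) : R :=
  \sum_(k < n) v k * w k.

Definition Uvec (R : realType) (n c : nat) (S : 'I_n -> nat) : 'I_n -> R :=
  fun k => (Num.floor ((n ^ c)%N%:R * (S k)%:R / enorm (fun j => (S j)%:R : R)))%:~R.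

Definition cos_a (R : realType) (n c : nat) (S : 'I_n -> nat) : R :=
  let Sr := fun j => (S j)%:R : R in
  let U := Uvec R c S in
  dotp U Sr / (enorm U * enorm Sr).

Definition dstar (R : realType) (n c : nat) (S : 'I_n -> nat) : R :=
  Num.sqrt n%:R / 2 * Num.sqrt (1 - cos_a R c S ^+ 2).

(* Let sigma = ||S||, T = S^T 1, e_k = N s_k / sigma - u_k in [0, 1) and w = 2Q - 1,
   a vector of signs.  The hypothesis on Q says U^T w = 2 d ||U||, and N S = sigma (U + e)
   gives N (2 S^T Q - T) = N S^T w = sigma (U^T w + e^T w).  Here |e^T w| <= n, and
   |U^T w| <= 2 d* ||U|| <= n because (1 - c_a^2) ||U||^2 is the squared distance from U
   to the line R S, which is at most ||U - (N / sigma) S||^2 = ||e||^2 <= n.  Hence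
   N |2 S^T Q - T| <= 2 n sigma <= 2 n T. *)

From mathcomp Require Import all_boot all_order all_algebra.
From mathcomp Require Import reals.
From mathcomp Require Import ring lra.
Set Implicit Arguments. Unset Strict Implicit. Unset Printing Implicit Defensive.
Import Order.TTheory GRing.Theory Num.Theory.
Local Open Scope ring_scope.

Section DotProduct.
Variables (R : comPzRingType) (n : nat).
Implicit Types (u v e w q : 'I_n -> R).

Lemma dotp_sign u q :
  dotp u (fun k => 2 * q k - 1) = 2 * dotp u q - dotp u (fun _ => 1).
Proof. by rewrite /dotp mulr_sumr -sumrB; apply: eq_bigr => k _; ring. Qed.

Lemma dotp_decompose (a b : R) u v e w :
  (forall k, a * u k = b * (v k + e k)) ->
  a * dotp u w = b * (dotp v w + dotp e w).
Proof.
move=> uve; rewrite /dotp -big_split !mulr_sumr /=.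
by apply: eq_bigr => k _; rewrite mulrA uve; ring.
Qed.

End DotProduct.

Section RealDotProduct.
Variables (R : realFieldType) (n : nat).
Implicit Types (u v : 'I_n -> R).

Lemma dotp_ge0 v : 0 <= dotp v v.
Proof. by apply: sumr_ge0 => k _; rewrite -expr2 sqr_ge0. Qed.

Lemma norm_dotp_le_card u v :
  (forall k, `|u k| <= 1) -> (forall k, `|v k| <= 1) -> `|dotp u v| <= n%:R.
Proof.
move=> u_le1 v_le1; apply: le_trans (ler_norm_sum _ _ _) _.
rewrite -[n in n%:R]card_ord -sumr_const; apply: ler_sum => k _.
by rewrite normrM -[1]mulr1 ler_pM.
Qed.

Lemma dotp_sub_proj_le u v t : 0 < dotp v v ->
  dotp u u - dotp u v ^+ 2 / dotp v v
    <= dotp (fun k => u k - t * v k) (fun k => u k - t * v k).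
Proof.
move=> vv_gt0.
have -> : dotp (fun k => u k - t * v k) (fun k => u k - t * v k)
    = dotp u u - 2 * t * dotp u v + t ^+ 2 * dotp v v.
  rewrite /dotp !mulr_sumr -sumrB -big_split /=.
  by apply: eq_bigr => k _; ring.
have : 0 <= (t * dotp v v - dotp u v) ^+ 2 / dotp v v.
  by rewrite divr_ge0 ?sqr_ge0 ?ltW.
have -> : (t * dotp v v - dotp u v) ^+ 2 / dotp v v
    = t ^+ 2 * dotp v v - 2 * t * dotp u v + dotp u v ^+ 2 / dotp v v.
  by field; rewrite gt_eqF.
lra.
Qed.

Lemma rel_dev_half_le (p t N b : R) :
  0 < t -> 0 < N -> N * `|2 * p - t| <= b * t -> `|p / (t / 2) - 1| <= b / N.
Proof.
move=> t_gt0 N_gt0 dev_le.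
have -> : p / (t / 2) - 1 = (2 * p - t) / t by field; rewrite gt_eqF.
rewrite normrM [`|t^-1|]gtr0_norm ?invr_gt0 // ler_pdivrMr // mulrAC.
by rewrite ler_pdivlMr // mulrC.
Qed.

End RealDotProduct.

Section EuclideanNorm.
Variables (R : rcfType) (n : nat).
Implicit Types (u v : 'I_n -> R).

Lemma enorm_ge0 v : 0 <= enorm v.
Proof. exact: sqrtr_ge0. Qed.

Lemma sqr_enorm v : enorm v ^+ 2 = dotp v v.
Proof.
rewrite /enorm sqr_sqrtr; last exact: dotp_ge0.
by apply: eq_bigr => k _; rewrite expr2.
Qed.

Lemma enorm_gt0 v k : v k != 0 -> 0 < enorm v.
Proof.
move=> vk0; rewrite /enorm sqrtr_gt0 (bigD1 k) //=.
rewrite ltr_pwDl ?exprn_even_gt0 //.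
by apply: sumr_ge0 => j _; exact: sqr_ge0.
Qed.

Lemma enorm_le_sum v : (forall k, 0 <= v k) -> enorm v <= \sum_k v k.
Proof.
move=> v_ge0; have sum_ge0 : 0 <= \sum_k v k by exact: sumr_ge0.
rewrite -(ger0_norm sum_ge0) -sqrtr_sqr ler_wsqrtr // expr2 mulr_suml.
apply: ler_sum => k _; rewrite expr2 ler_wpM2l //.
by rewrite (bigD1 k) //= lerDl sumr_ge0.
Qed.

Lemma dotp_offset_eq0 u (q : 'I_n -> R) d :
  dotp u (fun k => q k - (2^-1 * 1 + u k / enorm u * d)) = 0 ->
  dotp u (fun k => 2 * q k - 1) = 2 * d * enorm u.
Proof.
have expand : dotp u (fun k => q k - (2^-1 * 1 + u k / enorm u * d))
    = 2^-1 * dotp u (fun k => 2 * q k - 1) - d / enorm u * dotp u u.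
  rewrite /dotp !mulr_sumr -sumrB; apply: eq_bigr => k _.
  (* abstracting ||u||^-1 spares field the side condition ||u|| != 0 *)
  by move: (enorm u)^-1 => ia; field.
have norm_scale : d / enorm u * dotp u u = d * enorm u.
  have [->|u_neq0] := eqVneq (enorm u) 0; first by rewrite invr0 !mulr0 mul0r.
  by rewrite -sqr_enorm; field.
rewrite expand norm_scale => /eqP; rewrite subr_eq0 => /eqP half_eq.
by rewrite -mulrA -half_eq; field.
Qed.

Lemma sqrt_mul_le (x y a : R) :
  0 <= a -> x * a ^+ 2 <= y -> Num.sqrt x * a <= Num.sqrt y.
Proof.
move=> a_ge0 xa_le; rewrite mulrC -[a in a * _]ger0_norm // -sqrtr_sqr.
by rewrite -sqrtrM ?sqr_ge0 // ler_wsqrtr // mulrC.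
Qed.

End EuclideanNorm.

Section FloorApproximation.
Variables (R : realType) (n c : nat) (S : 'I_n -> nat).
Hypothesis S_neq0 : exists k, S k <> 0%N.

Local Notation Sr := (fun k => (S k)%:R : R).
Local Notation N := ((n ^ c)%N%:R : R).
Local Notation U := (Uvec R c S).

Let rounding_error k := N * Sr k / enorm Sr - U k.

Lemma pow_card_gt0 : 0 < N.
Proof.
by case: S_neq0 => k _; rewrite ltr0n expn_gt0 (leq_ltn_trans _ (ltn_ord k)).
Qed.

Lemma enorm_Sr_gt0 : 0 < enorm Sr.
Proof.
case: S_neq0 => k /eqP Sk0.
by apply: (@enorm_gt0 _ _ (fun j => (S j)%:R : R) k); rewrite pnatr_eq0.
Qed.

Lemma rounding_error_itv k : 0 <= rounding_error k < 1.
Proof.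
have /andP[] := floor_itv (N * Sr k / enorm Sr).
by rewrite intrD /rounding_error /Uvec; lra.
Qed.

Lemma norm_rounding_error_le1 k : `|rounding_error k| <= 1.
Proof. by have /andP[? ?] := rounding_error_itv k; rewrite ger0_norm // ltW. Qed.

Lemma scaled_Sr_split k : N * Sr k = enorm Sr * (U k + rounding_error k).
Proof.
have := enorm_Sr_gt0; rewrite /rounding_error addrC subrK => S_gt0.
by field; rewrite gt_eqF.
Qed.

Lemma sin2_mul_enorm_Uvec_le : (1 - cos_a R c S ^+ 2) * enorm U ^+ 2 <= n%:R.
Proof.
have [->|U_neq0] := eqVneq (enorm U) 0; first by rewrite expr0n mulr0.
have S_gt0 := enorm_Sr_gt0.
have -> : (1 - cos_a R c S ^+ 2) * enorm U ^+ 2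
    = dotp U U - dotp U Sr ^+ 2 / dotp Sr Sr.
  by rewrite /cos_a -!sqr_enorm; field; rewrite U_neq0 gt_eqF.
apply: le_trans (dotp_sub_proj_le U (N / enorm Sr) _) _.
  by rewrite -sqr_enorm exprn_gt0.
rewrite /dotp (eq_bigr (fun k => rounding_error k * rounding_error k)).
  apply: le_trans (ler_norm _) _.
  exact: norm_dotp_le_card norm_rounding_error_le1 norm_rounding_error_le1.
by move=> k _; rewrite /rounding_error; field; rewrite gt_eqF.
Qed.

Lemma dstar_mul_enorm_Uvec_le : dstar R c S * enorm U <= n%:R / 2.
Proof.
have sqrt_n_half_ge0 : 0 <= Num.sqrt (n%:R : R) / 2 by rewrite divr_ge0 ?sqrtr_ge0.
have -> : dstar R c S * enorm U
    = Num.sqrt n%:R / 2 * (Num.sqrt (1 - cos_a R c S ^+ 2) * enorm U).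
  by rewrite /dstar mulrA.
apply: le_trans (ler_wpM2l sqrt_n_half_ge0 _) _.
  exact: sqrt_mul_le (enorm_ge0 _) sin2_mul_enorm_Uvec_le.
by rewrite mulrAC -expr2 sqr_sqrtr.
Qed.

Lemma scaled_norm_dotp_Sr_le (w : 'I_n -> R) :
  (forall k, `|w k| <= 1) -> `|dotp U w| <= n%:R ->
  N * `|dotp Sr w| <= 2 * n%:R * enorm Sr.
Proof.
move=> w_le1 Uw_le; have S_gt0 := enorm_Sr_gt0.
rewrite -(gtr0_norm pow_card_gt0) -normrM (dotp_decompose w scaled_Sr_split).
rewrite normrM gtr0_norm // mulrC ler_wpM2r ?(ltW S_gt0) //.
have := norm_dotp_le_card norm_rounding_error_le1 w_le1.
by have := ler_normD (dotp U w) (dotp rounding_error w); lra.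
Qed.

End FloorApproximation.

Theorem theorem2p3 (R : realType) (m n c : nat) (S : 'I_n -> nat)
  (hS : forall k, (S k <= 2 ^ m)%N)
  (hS0 : exists k, S k <> 0%N)
  (Q : 'I_n -> bool) (d : R)
  (hd : - dstar R c S <= d <= dstar R c S)
  (hQ : let U := Uvec R c S in
        dotp U (fun k => (Q k)%:R - (2^-1 * 1 + U k / enorm U * d)) = 0) :
  let Sr := fun k => (S k)%:R : R in
  `| dotp Sr (fun k => (Q k)%:R) / (dotp Sr (fun _ => 1) / 2) - 1 |
    <= 2 * (n%:R / (n ^ c)%N%:R).
Proof.
rewrite /=; set Sr := fun k => (S k)%:R : R; pose w k : R := 2 * (Q k)%:R - 1.
have w_le1 k : `|w k| <= 1.
  by rewrite /w ler_norml; case: (Q k); rewrite /= ?mulr1n ?mulr0n; lra.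
have Uw_le : `|dotp (Uvec R c S) w| <= n%:R.
  rewrite (dotp_offset_eq0 hQ) ler_norml.
  have := dstar_mul_enorm_Uvec_le R c hS0; have := enorm_ge0 (Uvec R c S).
  case/andP: hd; nra.
have S_le_T : enorm Sr <= dotp Sr (fun _ => 1).
  by rewrite /dotp; under eq_bigr do rewrite mulr1; exact: enorm_le_sum.
rewrite mulrA; apply: rel_dev_half_le.
- exact: lt_le_trans (enorm_Sr_gt0 R hS0) S_le_T.
- exact: pow_card_gt0 hS0.
rewrite -dotp_sign; apply: le_trans (scaled_norm_dotp_Sr_le hS0 w_le1 Uw_le) _.
by rewrite ler_wpM2l // mulr_ge0 ?ler0n.
Qed.
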